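(* Let $C^0\subset\mathcal{L}^0$ be a set of pairwise disjoint lines on ${\rm F}_5$ with $\#C^0=5$. Then $\#\varphi_{5,+}(C^0)\ge3$ or $\#\varphi_{5,-}(C^0)\ge3$.
   Context: ${\rm F}_5\subset\mathbb{P}^3(\mathbb{C})$ is the surface $x^5-y^5-z^5+w^5=0$. Let $\eta$ be a primitive 5th root of unity. For $k,i\in\{0,\dots,4\}$ let $L^0_{k,i}$ be the line $\{y=\eta^i x,\ w=\eta^k z\}$ and $\mathcal{L}^0=\{L^0_{k,i}\}_{k,i}$. Define $\varphi_{5,\pm}(k,i)=r_5(i\pm k)$, where $r_5$ is the remainder modulo 5, and for a set $X$ of lines $L^0_{k,i}$ let $\varphi_{5,\pm}(X)$ be the set of values $\varphi_{5,\pm}(k,i)$ over $L^0_{k,i}\in X$. *)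

From mathcomp Require Import all_boot all_order all_algebra all_field.
Set Implicit Arguments. Unset Strict Implicit. Unset Printing Implicit Defensive.
Import GRing.Theory Num.Theory.
Local Open Scope ring_scope.

(* Points of P^3(C) are represented by nonzero coordinate vectors (x,y,z,w);
   complex numbers are modelled by algC. A line index is a pair (k,i). *)

Definition onF5 (x y z w : algC) : Prop :=
  x ^+ 5 - y ^+ 5 - z ^+ 5 + w ^+ 5 = 0.

(* (x,y,z,w) lies on the line L^0_{k,i} = {y = eta^i x, w = eta^k z} *)
Definition onL0 (eta : algC) (ki : 'I_5 * 'I_5) (x y z w : algC) : Prop :=
  y = eta ^+ ki.2 * x /\ w = eta ^+ ki.1 * z.

Definition lines_disjoint (eta : algC) (p q : 'I_5 * 'I_5) : Prop :=
  forall x y z w : algC, onL0 eta p x y z w -> onL0 eta q x y z w ->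
    [/\ x = 0, y = 0, z = 0 & w = 0].

(* phi_{5,+}(k,i) = r_5(i+k),  phi_{5,-}(k,i) = r_5(i-k) *)
Definition phi5p (ki : 'I_5 * 'I_5) : nat := ((ki.2 + ki.1) %% 5)%N.
Definition phi5m (ki : 'I_5 * 'I_5) : nat := ((ki.2 + (5 - ki.1)) %% 5)%N.

From mathcomp Require Import all_boot all_order all_algebra all_field ring.
Set Implicit Arguments. Unset Strict Implicit. Unset Printing Implicit Defensive.
Local Open Scope ring_scope.
Import GRing.Theory.

(* Disjoint lines L^0_{k,i} have distinct k and distinct i, so C^0 is the
   graph of a permutation of Z/5, and both i + k and i - k sum to 0 over C^0.
   A function from five points to F_5 with sum 0 never takes exactly two
   values: values a != b with multiplicities m and 5 - m would give
   m (a - b) = 0 with 0 < m < 5.  As 2 is invertible mod 5, two distinct lines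
   of C^0 differ in i + k or in i - k, which therefore takes a third value. *)

Definition takes_three_values (T : finType) (rT : eqType) (g : T -> rT)
    (A : {set T}) :=
  exists x y z, [/\ x \in A, y \in A, z \in A &
    [&& g x != g y, g x != g z & g y != g z]].

Lemma takes_three_values_size_undup (T : finType) (rT : eqType) (g : T -> rT)
    (A : {set T}) :
  takes_three_values g A -> (3 <= size (undup [seq g x | x <- enum A]))%N.
Proof.
move=> [x [y [z [Ax Ay Az /and3P [gxy gxz gyz]]]]].
have sub : {subset [:: g x; g y; g z] <= undup [seq g x | x <- enum A]}.
  by move=> v; rewrite !inE mem_undup => /or3P [] /eqP ->; apply: map_f;
    rewrite mem_enum.
by apply: (uniq_leq_size _ sub); rewrite /= !inE negb_or gxy gxz gyz.
Qed.

Lemma size_undup_map_inj (T rT rT' : eqType) (f : rT -> rT') (g : T -> rT)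
    (h : T -> rT') (s : seq T) :
  injective f -> h =1 f \o g -> size (undup (map h s)) = size (undup (map g s)).
Proof. by move=> f_inj hE; rewrite (eq_map hE) map_comp undup_map_inj ?size_map. Qed.

Section ZeroSumThreeValues.

Variables (F : fieldType) (p : nat) (T : finType) (A : {set T}) (g : T -> F).
Hypotheses (pcharFp : p \in [pchar F]) (A_card : #|A| = p)
  (sum_g : \sum_(x in A) g x = 0).

Lemma zero_sum_third_value x y : x \in A -> y \in A -> g x != g y ->
  exists2 z, z \in A & (g z != g x) && (g z != g y).
Proof.
move=> Ax Ay gxy; apply/exists_inP.
rewrite -[X in is_true X]negbK negb_exists_in; apply/negP => /forall_inP two_valued.
pose B := [set z in A | g z == g y].
have sum_shift : \sum_(z in A) (g z - g x) = (g y - g x) *+ #|B|.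
  rewrite (bigID (fun z => g z == g y)) /= [X in _ + X]big1 ?addr0.
    rewrite -sumr_const; apply: eq_big => [z | z /andP [_ /eqP gzy]].
      by rewrite inE.
    by rewrite gzy.
  move=> z /andP [Az gzy]; move: (two_valued z Az); rewrite gzy andbT negbK.
  by move=> /eqP gzx; rewrite gzx subrr.
have sum_shift0 : \sum_(z in A) (g z - g x) = 0.
  by rewrite sumrB sum_g sumr_const A_card -mulr_natr (GRing.pcharf0 pcharFp) mulr0 subrr.
have : (p %| #|B|)%N.
  move/eqP: sum_shift0; rewrite sum_shift -mulr_natr mulf_eq0 subr_eq0 eq_sym.
  by rewrite (negPf gxy) (dvdn_pcharf pcharFp).
have B_gt0 : (0 < #|B|)%N by apply/card_gt0P; exists y; rewrite inE Ay eqxx.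
have B_lt : (#|B| < p)%N.
  rewrite -A_card (cardsD1 x A) Ax add1n ltnS; apply: subset_leq_card.
  apply/subsetP => z; rewrite !inE => /andP [Az gzy]; rewrite Az andbT.
  by apply: contraTneq gzy => ->.
by move=> /(dvdn_leq B_gt0); rewrite leqNgt B_lt.
Qed.

Lemma zero_sum_three_values x y : x \in A -> y \in A -> g x != g y ->
  takes_three_values g A.
Proof.
move=> Ax Ay gxy; have [z Az /andP [gzx gzy]] := zero_sum_third_value Ax Ay gxy.
by exists x, y, z; split; rewrite // gxy eq_sym gzx eq_sym gzy.
Qed.

End ZeroSumThreeValues.

Section OddPrimeField.

Variable p : nat.
Hypotheses (p_pr : prime p) (p_gt2 : (2 < p)%N).

Lemma Fp_natr2_neq0 : 2%:R != 0 :> 'F_p.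
Proof. by rewrite -(dvdn_pcharf (pchar_Fp p_pr)) gtnNdvd. Qed.

Lemma sum_Fp : \sum_(k : 'F_p) k = 0.
Proof.
have sumN : \sum_(k : 'F_p) k = - \sum_(k : 'F_p) k.
  by rewrite {1}(reindex_inj oppr_inj) sumrN.
apply/eqP; move/eqP: sumN; rewrite -addr_eq0 -mulr2n -mulr_natr mulf_eq0.
by rewrite (negPf Fp_natr2_neq0) orbF.
Qed.

Lemma sum_inj_Fp (T : finType) (A : {set T}) (f : T -> 'F_p) :
  #|A| = p -> {in A &, injective f} -> \sum_(x in A) f x = 0.
Proof.
move=> A_card f_inj; rewrite -(big_imset idfun f_inj) /=.
have -> : f @: A = setT.
  by apply/eqP; rewrite eqEcard subsetT cardsT card_Fp // card_in_imset // A_card leqnn.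
by rewrite (eq_bigl xpredT) ?sum_Fp // => k; rewrite inE.
Qed.

Lemma add_sub_Fp_inj : injective (fun u : 'F_p * 'F_p => (u.2 + u.1, u.2 - u.1)).
Proof.
move=> [a b] [c d] uvE; have [/= sumE subE] := (congr1 fst uvE, congr1 snd uvE).
have twice_fst (x y : 'F_p) : 2%:R * x = (y + x) - (y - x) by ring.
have twice_snd (x y : 'F_p) : 2%:R * y = (y + x) + (y - x) by ring.
by congr pair; apply: (mulfI Fp_natr2_neq0);
  rewrite ?(twice_fst a b) ?(twice_fst c d) ?(twice_snd a b) ?(twice_snd c d) sumE subE.
Qed.

End OddPrimeField.

Section PermutationGraph.

Variables (p : nat) (C : {set 'F_p * 'F_p}).
Hypotheses (p_pr : prime p) (p_gt2 : (2 < p)%N) (C_card : #|C| = p)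
  (C_fst : {in C &, injective fst}) (C_snd : {in C &, injective snd}).

Lemma graph_add_or_sub_three_values :
  takes_three_values (fun u : 'F_p * 'F_p => u.2 + u.1) C \/
  takes_three_values (fun u : 'F_p * 'F_p => u.2 - u.1) C.
Proof.
have [u [v [Cu Cv uv]]] : exists u v, [/\ u \in C, v \in C & u != v].
  by apply/card_gt1P; rewrite C_card ltnW.
have pcharFp := pchar_Fp p_pr.
have sum_add : \sum_(w in C) (w.2 + w.1) = 0.
  by rewrite big_split /= !sum_inj_Fp ?addr0.
have sum_sub : \sum_(w in C) (w.2 - w.1) = 0.
  by rewrite sumrB !sum_inj_Fp ?subr0.
have : (u.2 + u.1 != v.2 + v.1) || (u.2 - u.1 != v.2 - v.1).
  rewrite -negb_and; apply: contra uv => /andP [/eqP addE /eqP subE].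
  by apply/eqP/(add_sub_Fp_inj p_pr p_gt2); rewrite /= addE subE.
case/orP => uv_neq; [left | right].
  exact: (zero_sum_three_values (g := fun w => w.2 + w.1) pcharFp C_card sum_add
            Cu Cv uv_neq).
exact: (zero_sum_three_values (g := fun w => w.2 - w.1) pcharFp C_card sum_sub
          Cu Cv uv_neq).
Qed.

End PermutationGraph.

Lemma disjoint_lines_fst_neq eta (u v : 'I_5 * 'I_5) :
  lines_disjoint eta u v -> u.1 != v.1.
Proof.
move=> uv_disj; apply/eqP => uvE.
have on_u : onL0 eta u 0 0 1 (eta ^+ u.1) by rewrite /onL0 mulr0 mulr1.
have on_v : onL0 eta v 0 0 1 (eta ^+ u.1) by rewrite /onL0 mulr0 mulr1 uvE.
by have [_ _ /eqP] := uv_disj _ _ _ _ on_u on_v; rewrite oner_eq0.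
Qed.

Lemma disjoint_lines_snd_neq eta (u v : 'I_5 * 'I_5) :
  lines_disjoint eta u v -> u.2 != v.2.
Proof.
move=> uv_disj; apply/eqP => uvE.
have on_u : onL0 eta u 1 (eta ^+ u.2) 0 0 by rewrite /onL0 mulr0 mulr1.
have on_v : onL0 eta v 1 (eta ^+ u.2) 0 0 by rewrite /onL0 mulr0 mulr1 uvE.
by have [/eqP] := uv_disj _ _ _ _ on_u on_v; rewrite oner_eq0.
Qed.

Lemma phi5pE (u : 'I_5 * 'I_5) : phi5p u = val ((u.2 : 'F_5) + u.1).
Proof. by []. Qed.

Lemma phi5mE (u : 'I_5 * 'I_5) : phi5m u = val ((u.2 : 'F_5) - u.1).
Proof. by rewrite /phi5m /= modnDmr. Qed.

Theorem lemma3p3 (eta : algC) (Heta : 5.-primitive_root eta)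
  (C0 : {set 'I_5 * 'I_5}) :
  #|C0| = 5%N ->
  (forall p q, p \in C0 -> q \in C0 -> p != q -> lines_disjoint eta p q) ->
  (3 <= size (undup [seq phi5p p | p <- enum C0]))%N \/ (3 <= size (undup [seq phi5m p | p <- enum C0]))%N.
Proof.
move=> C0_card C0_disj.
have C0_fst : {in C0 &, injective (fst : 'F_5 * 'F_5 -> 'F_5)}.
  move=> u v Cu Cv; apply: contra_eq => /(C0_disj u v Cu Cv).
  exact: disjoint_lines_fst_neq.
have C0_snd : {in C0 &, injective (snd : 'F_5 * 'F_5 -> 'F_5)}.
  move=> u v Cu Cv; apply: contra_eq => /(C0_disj u v Cu Cv).
  exact: disjoint_lines_snd_neq.
rewrite (size_undup_map_inj _ val_inj phi5pE) (size_undup_map_inj _ val_inj phi5mE).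
by case: (graph_add_or_sub_three_values (p := 5) isT isT C0_card C0_fst C0_snd) =>
  /takes_three_values_size_undup; [left | right].
Qed.
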